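(* Let $K,H\le\mathbb{H}^\times$ be finite with $[K,K]\le H\trianglelefteq K$ and $H\ne\{1\}$, and let $n\ge3$. Then the poset $\mathcal{P}(G_n(K,H))$ of parabolic subgroups of $G_n(K,H)$ (ordered by inclusion), and hence the intersection lattice $L(\mathcal{A}(G_n(K,H)))$ (ordered by reverse inclusion), is isomorphic to the Dowling lattice $\mathcal{D}_n(K)$.
   Context: $\mathbb{H}$: quaternions. $A_n(K,H)$: diagonal matrices $\mathrm{diag}(k_1,\dots,k_n)$, $k_i\in K$, $k_1\cdots k_n\in H$; $G_n(K,H)$: group generated by $A_n(K,H)$ and permutation matrices, acting on $\mathbb{H}^n$ by left multiplication; it is a quaternionic reflection group (generated by finite-order $g$ with $\mathrm{rk}(1-g)=1$), $\mathcal{A}(G)$ is the set of fixed hyperplanes of its reflections, and $L(\mathcal{A})$ the set of intersections of subsets of $\mathcal{A}$. A parabolic subgroup is the pointwise stabilizer of a subset of $\mathbb{H}^n$. Dowling lattice $\mathcal{D}_n(K)$: its elements are partial $K$-partitions of $\{1,\dots,n\}$, i.e. sets $\{(B_1,[\xi_1]),\dots,(B_d,[\xi_d])\}$ where $B_1,\dots,B_d$ are pairwise disjoint nonempty subsets of $\{1,\dots,n\}$ (not necessarily covering it) and $[\xi_j]$ is the class of a function $\xi_j:B_j\to K$ modulo $\xi_j\sim g\xi_j$ ($g\in K$ constant, left multiplication). The order is: $\pi\le\pi'$ iff every block $(B',[\xi'])$ of $\pi'$ satisfies $B'=B_{i_1}\cup\dots\cup B_{i_p}$ for some blocks $(B_{i_r},[\xi_{i_r}])$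 of $\pi$ with $\xi'|_{B_{i_r}}\in K\cdot\xi_{i_r}$ for each $r$. *)

From HB Require Import structures.
From mathcomp Require Import all_boot all_order all_algebra.
From mathcomp Require Import fingroup perm.
From mathcomp Require Import classical_sets cardinality reals.
From mathcomp Require Import ring.

Set Implicit Arguments.
Unset Strict Implicit.
Unset Printing Implicit Defensive.

Import Order.TTheory GRing.Theory Num.Theory.
Local Open Scope ring_scope.

Record quat (R : Type) := Quat { qa : R; qb : R; qc : R; qd : R }.

Section Quaternions.
Variable R : fieldType.

Definition quat_to (x : quat R) := (qa x, qb x, qc x, qd x).
Definition quat_of (p : R * R * R * R) := Quat p.1.1.1 p.1.1.2 p.1.2 p.2.
Lemma quat_toK : cancel quat_to quat_of. Proof. by case. Qed.

HB.instance Definition _ := Equality.copy (quat R) (can_type quat_toK).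
HB.instance Definition _ := Choice.copy (quat R) (can_type quat_toK).

Definition qzero : quat R := Quat 0 0 0 0.
Definition qone : quat R := Quat 1 0 0 0.
Definition qopp (x : quat R) := Quat (- qa x) (- qb x) (- qc x) (- qd x).
Definition qadd (x y : quat R) :=
  Quat (qa x + qa y) (qb x + qb y) (qc x + qc y) (qd x + qd y).
Definition qmul (x y : quat R) :=
  Quat (qa x * qa y - qb x * qb y - qc x * qc y - qd x * qd y)
       (qa x * qb y + qb x * qa y + qc x * qd y - qd x * qc y)
       (qa x * qc y - qb x * qd y + qc x * qa y + qd x * qb y)
       (qa x * qd y + qb x * qc y - qc x * qb y + qd x * qa y).

Fact qaddA : associative qadd.
Proof. by move=> [? ? ? ?] [? ? ? ?] [? ? ? ?]; rewrite /qadd /=; congr Quat; ring. Qed.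
Fact qaddC : commutative qadd.
Proof. by move=> [? ? ? ?] [? ? ? ?]; rewrite /qadd /=; congr Quat; ring. Qed.
Fact qadd0 : left_id qzero qadd.
Proof. by move=> [? ? ? ?]; rewrite /qadd /=; congr Quat; ring. Qed.
Fact qaddN : left_inverse qzero qopp qadd.
Proof. by move=> [? ? ? ?]; rewrite /qadd /=; congr Quat; ring. Qed.
Fact qmulA : associative qmul.
Proof. by move=> [? ? ? ?] [? ? ? ?] [? ? ? ?]; rewrite /qmul /=; congr Quat; ring. Qed.
Fact qmul1 : left_id qone qmul.
Proof. by move=> [? ? ? ?]; rewrite /qmul /=; congr Quat; ring. Qed.
Fact qmulr1 : right_id qone qmul.
Proof. by move=> [? ? ? ?]; rewrite /qmul /=; congr Quat; ring. Qed.
Fact qmulDl : left_distributive qmul qadd.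
Proof. by move=> [? ? ? ?] [? ? ? ?] [? ? ? ?]; rewrite /qmul /qadd /=; congr Quat; ring. Qed.
Fact qmulDr : right_distributive qmul qadd.
Proof. by move=> [? ? ? ?] [? ? ? ?] [? ? ? ?]; rewrite /qmul /qadd /=; congr Quat; ring. Qed.
Fact qone_neq0 : qone != qzero.
Proof. by apply/eqP => -[] /eqP; rewrite oner_eq0. Qed.

HB.instance Definition _ := GRing.isNzRing.Build (quat R)
  qaddA qaddC qadd0 qaddN qmulA qmul1 qmulr1 qmulDl qmulDr qone_neq0.

Definition qnorm (x : quat R) := qa x ^+ 2 + qb x ^+ 2 + qc x ^+ 2 + qd x ^+ 2.
Definition qunit : pred (quat R) := fun x => qnorm x != 0.
Definition qinv (x : quat R) :=
  if qnorm x == 0 then x else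
  Quat (qa x / qnorm x) (- qb x / qnorm x) (- qc x / qnorm x) (- qd x / qnorm x).

Lemma qnormM (x y : quat R) : qnorm (x * y) = qnorm x * qnorm y.
Proof. by case: x y => [? ? ? ?] [? ? ? ?]; rewrite /qnorm /= /qmul /=; ring. Qed.

Fact qmulV : {in qunit, left_inverse 1 qinv *%R}.
Proof.
move=> [a b c d]; rewrite /qunit /qnorm /= => h.
change (qmul (qinv (Quat a b c d)) (Quat a b c d) = qone).
rewrite /qinv /qnorm /= (negPf h) /qmul /qone /=.
congr Quat; field; exact: h.
Qed.
Fact qmulrV : {in qunit, right_inverse 1 qinv *%R}.
Proof.
move=> [a b c d]; rewrite /qunit /qnorm /= => h.
change (qmul (Quat a b c d) (qinv (Quat a b c d)) = qone).
rewrite /qinv /qnorm /= (negPf h) /qmul /qone /=.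
congr Quat; field; exact: h.
Qed.
Fact qunitP : forall x y : quat R, y * x = 1 /\ x * y = 1 -> qunit x.
Proof.
move=> x y [yx _]; rewrite /qunit; apply/eqP => h.
have := congr1 qnorm yx; rewrite qnormM h mulr0.
by rewrite /qnorm /GRing.one /= /qone /=; move/eqP; rewrite expr1n !expr0n /= !addr0 eq_sym oner_eq0.
Qed.
Fact qinv_out : {in [predC qunit], qinv =1 id}.
Proof. by move=> x; rewrite inE /qunit /qinv negbK => /eqP ->; rewrite eqxx. Qed.

HB.instance Definition _ := GRing.NzRing_hasMulInverse.Build (quat R)
  qmulV qmulrV qunitP qinv_out.

End Quaternions.

Local Open Scope classical_set_scope.

Definition is_subgroup (T : pzRingType) (X : set T) : Prop :=
  X 1 /\ (forall x y, X x -> X y -> X (x * y)) /\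
  (forall x, X x -> exists2 y, X y & x * y = 1 /\ y * x = 1).

Definition gen_group (T : pzRingType) (S : set T) : set T :=
  [set g | forall X, is_subgroup X -> S `<=` X -> X g].

Definition normal_subgroup (T : unitRingType) (H K : set T) : Prop :=
  is_subgroup H /\ H `<=` K /\
  (forall k h, K k -> H h -> H (k * h * k^-1)).

Definition commutator_subgroup (T : unitRingType) (K : set T) : set T :=
  gen_group [set k1^-1 * k2^-1 * k1 * k2 | k1 in K & k2 in K].

Section Reflection.
Variables (R : fieldType) (n : nat).
Local Notation qmx := ('M[quat R]_n).
Local Notation qvec := ('cV[quat R]_n).

Definition A_n (K H : set (quat R)) : set qmx :=
  [set D | exists d : 'rV[quat R]_n,
     D = diag_mx d /\ (forall i, K (d 0 i)) /\ H (\prod_(i < n) d 0 i)].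

Definition perm_matrices : set qmx := [set P | exists s : 'S_n, P = perm_mx s].

Definition G_n (K H : set (quat R)) : set qmx :=
  gen_group (A_n K H `|` perm_matrices).

Definition pstab (G : set qmx) (X : set qvec) : set qmx :=
  [set g | G g /\ forall x, X x -> g *m x = x].

Definition is_parabolic (G : set qmx) (P : set qmx) : Prop :=
  exists X : set qvec, P = pstab G X.

Definition parabolic (G : set qmx) := {P : set qmx | is_parabolic G P}.

Definition parabolic_le (G : set qmx) (P Q : parabolic G) : Prop :=
  sval P `<=` sval Q.

Definition rscale (u : qvec) (l : quat R) : qvec := map_mx (fun a => a * l) u.

Definition rank_one (A : qmx) : Prop :=
  exists u : qvec, u <> 0 /\
    range (fun v : qvec => A *m v) = [set rscale u l | l in [set: quat R]].

Definition is_reflection (G : set qmx) (g : qmx) : Prop :=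
  G g /\ (exists m, (0 < m)%N /\ g ^+ m = 1) /\ rank_one (1 - g).

Definition fixspace (g : qmx) : set qvec := [set v | g *m v = v].

Definition arrangement (G : set qmx) : set (set qvec) :=
  [set Y | exists2 r, is_reflection G r & Y = fixspace r].

Definition is_flat (G : set qmx) (X : set qvec) : Prop :=
  exists2 S, S `<=` arrangement G & X = \bigcap_(Y in S) Y.

Definition flat (G : set qmx) := {X : set qvec | is_flat G X}.

Definition flat_le (G : set qmx) (X Y : flat G) : Prop := sval Y `<=` sval X.

(* A block (B,[xi]) is encoded as the pair (B, C) where C is the set of *)
(* all functions eta : 'I_n -> H whose restriction to B lies in K.xi,   *)
(* i.e. C determines exactly the class [xi|_B].                         *)

Definition dclass (K : set (quat R)) (B : {set 'I_n}) (xi : 'I_n -> quat R)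
  : set ('I_n -> quat R) :=
  [set eta | exists2 g, K g & forall i, i \in B -> eta i = g * xi i].

Definition dblock := ({set 'I_n} * set ('I_n -> quat R))%type.

Definition is_dblock (K : set (quat R)) (b : dblock) : Prop :=
  b.1 != finset.set0 /\
  exists xi : 'I_n -> quat R, (forall i, i \in b.1 -> K (xi i)) /\
                              b.2 = dclass K b.1 xi.

Definition is_partial_K_partition (K : set (quat R)) (pi : set dblock) : Prop :=
  (forall b, pi b -> is_dblock K b) /\
  (forall b b', pi b -> pi b' -> b <> b' -> forall i, i \in b.1 -> i \notin b'.1).

Definition dowling (K : set (quat R)) := {p : set dblock | is_partial_K_partition K p}.

Definition dowling_le (K : set (quat R)) (p p' : dowling K) : Prop :=
  forall b', sval p' b' ->
    exists S : set dblock, S `<=` sval p /\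
      (forall i, i \in b'.1 <-> exists2 b, S b & i \in b.1) /\
      (forall b, S b -> forall xi', b'.2 xi' -> b.2 xi').

End Reflection.

Definition order_iso (A B : Type) (leA : A -> A -> Prop) (leB : B -> B -> Prop) :=
  exists f : A -> B, bijective f /\ forall x y, leA x y <-> leB (f x) (f y).

(* Elements of G_n(K,H) are monomial matrices with entries in K, so a matrix
   of G_n(K,H) fixing a set X of vectors also fixes every solution of the
   relations x_i = 0 and x_i = k x_j (k in K) valid on X.  These relations
   form a partial K-partition pi(X) whose solution space X_pi is therefore
   fixed too.  Conversely every X_pi is cut out by reflecting hyperplanes:
   those of diag(1,..,h,..,1) with 1 <> h in H kill the coordinates outside
   the blocks, and those of (i j) diag(..,a^-1,..,a,..) with a in K impose
   v_i = a v_j.  Hence pi |-> X_pi is an order-reversing bijection onto the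
   flats and pi |-> (pointwise stabilizer of X_pi) an order isomorphism onto
   the parabolic subgroups.  That X_pi' <= X_pi forces pi <= pi' is seen on
   the vector equal to xi'^-1 on one block (B', [xi']) of pi' and 0 elsewhere. *)

From mathcomp Require Import all_boot all_order all_algebra.
From mathcomp Require Import fingroup perm.
From mathcomp Require Import boolp classical_sets cardinality reals.

Set Implicit Arguments.
Unset Strict Implicit.
Unset Printing Implicit Defensive.

Import GRing.Theory Num.Theory.
Local Open Scope ring_scope.
Local Open Scope classical_set_scope.

Lemma qnorm_eq0 (R : realType) (x : quat R) : qnorm x = 0 -> x = 0.
Proof.
case: x => a b c d; rewrite /qnorm /= => /eqP.
rewrite !paddr_eq0 ?addr_ge0 ?sqr_ge0 // !sqrf_eq0.
by move=> /andP[/andP[/andP[/eqP-> /eqP->] /eqP->] /eqP->].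
Qed.

Lemma quat_unitf (R : realType) (x : quat R) : x != 0 -> x \is a GRing.unit.
Proof. by move=> nx; apply/negP => /eqP /qnorm_eq0 /eqP; rewrite (negPf nx). Qed.

Section Subgroups.
Variables (T : pzRingType) (X : set T).
Hypothesis X_group : is_subgroup X.

Lemma subgroup1 : X 1.
Proof. by case: X_group. Qed.

Lemma subgroupM x y : X x -> X y -> X (x * y).
Proof. by case: X_group => _ [XM _]; apply: XM. Qed.

Lemma subgroup_nontrivial : X <> [set 1] -> exists2 x, X x & x != 1.
Proof.
move=> X_neq1; apply: contrapT => X_trivial; apply: X_neq1; apply/seteqP.
split => x; last by move=> x1; have -> : x = 1 := x1; exact: subgroup1.
by move=> Xx; apply: contrapT => x_neq1; apply: X_trivial; exists x => //; apply/eqP.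
Qed.

End Subgroups.

Section UnitSubgroups.
Variables (T : unitRingType) (X : set T).
Hypothesis X_group : is_subgroup X.

Lemma subgroup_unit x : X x -> x \is a GRing.unit.
Proof. by case: X_group => _ [_ XV] /XV [y _ [xy yx]]; apply/unitrP; exists y. Qed.

Lemma subgroupV x : X x -> X x^-1.
Proof.
move=> Xx; case: X_group => _ [_ XV]; have [y Xy [xy _]] := XV _ Xx.
by rewrite -[x^-1]mulr1 -xy mulKr // subgroup_unit.
Qed.

Lemma subgroup_neq0 x : X x -> x != 0.
Proof. by move/subgroup_unit; apply: contraTneq => ->; rewrite unitr0. Qed.

Lemma subgroup_torsion x : finite_set X -> X x -> exists2 m, (0 < m)%N & x ^+ m = 1.
Proof.
move=> finX Xx; have Ux := subgroup_unit Xx.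
apply: contrapT => torsion_free.
have expx_inj : {in [set: nat] &, injective (fun k => x ^+ k)}.
  suff lt_neq a b : (a < b)%N -> x ^+ a <> x ^+ b.
    by move=> a b _ _ eab; case: (ltngtP a b) => // /lt_neq; [|move/nesym]; case.
  move=> ltab eab; apply: torsion_free; exists (b - a)%N; first by rewrite subn_gt0.
  apply: (mulrI (unitrX a Ux)); rewrite mulr1 -exprD subnKC ?eab //.
  exact: ltnW.
have powers_in : [set x ^+ k | k in [set: nat]] `<=` X.
  move=> _ [k _ <-]; elim: k => [|k IHk]; first by rewrite expr0; exact: (subgroup1 X_group).
  by rewrite exprS; exact: (subgroupM X_group).
apply: infinite_nat; rewrite -(eq_finite_set (inj_card_eq expx_inj)).
exact: sub_finite_set powers_in finX.
Qed.

End UnitSubgroups.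

Lemma gen_group_sub (T : pzRingType) (S : set T) : S `<=` gen_group S.
Proof. by move=> x Sx Y _ /(_ x Sx). Qed.

Lemma gen_groupM (T : pzRingType) (S : set T) x y :
  gen_group S x -> gen_group S y -> gen_group S (x * y).
Proof.
move=> Sx Sy Y Y_group SY.
by apply: (subgroupM Y_group); [exact: Sx | exact: Sy].
Qed.

Section BigNatMonoid.
Variables (T : Type) (idx : T) (op : Monoid.law idx).

Lemma big_nat_only1 (F : nat -> T) i n : (i < n)%N ->
  (forall m, (m < n)%N -> m != i -> F m = idx) ->
  \big[op/idx]_(0 <= m < n) F m = F i.
Proof.
move=> lt_in F1.
rewrite (big_cat_nat (leq0n i) (ltnW lt_in)) [X in op _ X](big_ltn lt_in).
rewrite !big1_seq => [|m|m] /=; first by rewrite Monoid.mul1m Monoid.mulm1.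
  rewrite mem_index_iota => /andP[lo hi].
  by apply: F1; rewrite // neq_ltn lo orbT.
rewrite mem_index_iota => /andP[_ hi].
by apply: F1; [exact: ltn_trans hi lt_in | rewrite neq_ltn hi].
Qed.

Lemma big_nat_pair (F : nat -> T) i j n : (i < j)%N -> (j < n)%N ->
  (forall m, m != i -> m != j -> F m = idx) ->
  \big[op/idx]_(0 <= m < n) F m = op (F i) (F j).
Proof.
move=> lt_ij lt_jn F1.
rewrite (big_cat_nat (leq0n j) (ltnW lt_jn)) [X in op _ X](big_ltn lt_jn).
rewrite (big_nat_only1 lt_ij) => [|m lt_mj mi]; last by rewrite F1 // ltn_eqF.
rewrite big1_seq => [|m /=]; first by rewrite Monoid.mulm1.
rewrite mem_index_iota => /andP[lo _].
by apply: F1; rewrite neq_ltn ?lo ?(ltn_trans lt_ij lo) ?orbT.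
Qed.

End BigNatMonoid.

Lemma order_iso_of_embedding (A B : Type) (leA : A -> A -> Prop)
    (leB : B -> B -> Prop) (g : B -> A) :
  injective g -> (forall a, exists b, g b = a) ->
  (forall b b', leA (g b) (g b') <-> leB b b') -> order_iso leA leB.
Proof.
move=> g_inj g_onto g_le; pose f a := projT1 (cid (g_onto a)).
have fK a : g (f a) = a := projT2 (cid (g_onto a)).
exists f; split; first by exists g => // b; apply: g_inj; rewrite fK.
by move=> a a'; rewrite -g_le !fK.
Qed.

Lemma matrix_eq_mulmx (T : pzRingType) m n (A B : 'M[T]_(m, n)) :
  (forall v : 'cV_n, A *m v = B *m v) -> A = B.
Proof.
move=> eqAB; apply/matrixP => i j.
by have := eqAB (delta_mx j 0); rewrite -!colE => /matrixP/(_ i 0); rewrite !mxE.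
Qed.

Lemma mulmx1B (T : pzRingType) n (g : 'M[T]_n) (v : 'cV_n) i :
  ((1 - g) *m v) i 0 = v i 0 - (g *m v) i 0.
Proof. by rewrite mulmxBl mul1mx; set w := g *m v; rewrite !mxE. Qed.

Section QuatMatrices.
Variables (R : realType) (n : nat).
Local Notation qvec := 'cV[quat R]_n.
Local Notation qmx := 'M[quat R]_n.

Lemma fixspaceP (g : qmx) (v : qvec) :
  fixspace g v <-> forall m, (g *m v) m 0 = v m 0.
Proof.
split => [gv m|gv]; first by rewrite gv.
by apply/matrixP => i j; rewrite (ord1 j) gv.
Qed.

Lemma rank_one_col (A : qmx) (u : qvec) (f : qvec -> quat R) :
  u != 0 -> (forall v, A *m v = rscale u (f v)) -> (forall l, exists v, f v = l) ->
  rank_one A.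
Proof.
move=> u_nz Af f_onto; exists u; split; first exact/eqP.
apply/seteqP; split => [_ [v _ <-]|_ [l _ <-]]; first by exists (f v).
by have [v <-] := f_onto l; exists v.
Qed.

End QuatMatrices.

Section DowlingSpace.
Variables (R : realType) (n : nat) (K : set (quat R)).
Hypothesis K_group : is_subgroup K.
Local Notation K1 := (subgroup1 K_group).
Local Notation KM := (subgroupM K_group).
Local Notation KV := (subgroupV K_group).
Local Notation K_unit := (subgroup_unit K_group).
Local Notation qvec := 'cV[quat R]_n.
Local Notation qmx := 'M[quat R]_n.
Local Notation dowlingK := (@dowling R n K).

Lemma dclass_in (B : {set 'I_n}) (xi eta : 'I_n -> quat R) :
  (forall i, i \in B -> K (xi i)) -> dclass K B xi eta ->
  forall i, i \in B -> K (eta i).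
Proof.
by move=> Kxi [g Kg eta_g] i iB; rewrite eta_g //; apply: KM => //; apply: Kxi.
Qed.

Lemma dclass_mul_eq (B : {set 'I_n}) (xi eta : 'I_n -> quat R) i j a b :
  dclass K B xi eta -> i \in B -> j \in B ->
  (eta i * a = eta j * b <-> xi i * a = xi j * b).
Proof.
move=> [g Kg eta_g] iB jB; rewrite !eta_g // -!mulrA.
by split => [|-> //]; apply: (mulrI (K_unit Kg)).
Qed.

Lemma dclass_refl (B : {set 'I_n}) (xi : 'I_n -> quat R) : dclass K B xi xi.
Proof. by exists 1; [exact: K1 | move=> i _; rewrite mul1r]. Qed.

Lemma dowling_block_class (p : dowlingK) b : sval p b ->
  exists2 xi : 'I_n -> quat R,
    (forall i, i \in b.1 -> K (xi i)) & b.2 = dclass K b.1 xi.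
Proof. by case: (svalP p) => blocks _ /blocks [_ [xi [Kxi ->]]]; exists xi. Qed.

Lemma dowling_block_uniq (p : dowlingK) b c i :
  sval p b -> sval p c -> i \in b.1 -> i \in c.1 -> b = c.
Proof.
move=> pb pc ib ic; apply: contrapT => neq_bc.
by case: (svalP p) => _ /(_ b c pb pc neq_bc i ib); rewrite ic.
Qed.

Definition dowling_space (p : dowlingK) : set qvec :=
  [set v | (forall i, (forall b, sval p b -> i \notin b.1) -> v i 0 = 0) /\
    (forall b, sval p b -> forall eta, b.2 eta ->
       forall i j, i \in b.1 -> j \in b.1 -> eta i * v i 0 = eta j * v j 0)].

Section InducedPartition.
Variable X : set qvec.

Definition coord_nz i := exists2 x, X x & x i 0 != 0.
Definition coord_ratio i j k := K k /\ forall x, X x -> x i 0 = k * x j 0.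
Definition coord_linked i j := exists k, coord_ratio i j k.

(* The block of r gathers the nonzero coordinates i with x_r = k x_i on X for
   some k in K; its class is represented by i |-> k. *)
Definition induced_blockset r : {set 'I_n} :=
  [set i | `[< coord_nz i /\ coord_linked r i >]].
Definition induced_coef r i := xget 1 (coord_ratio r i).
Definition induced_block r : dblock R n :=
  (induced_blockset r, dclass K (induced_blockset r) (induced_coef r)).
Definition induced_blocks : set (dblock R n) :=
  [set b | exists2 r, coord_nz r & b = induced_block r].

Lemma coord_ratio_uniq i j a b :
  coord_nz j -> coord_ratio i j a -> coord_ratio i j b -> a = b.
Proof.
move=> [x Xx xj_nz] [_ xa] [_ xb]; apply: (mulIr (quat_unitf xj_nz)).
by rewrite -xa // -xb.
Qed.

Lemma induced_coefE r i k : coord_nz i -> coord_ratio r i k -> induced_coef r i = k.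
Proof. by move=> nzi rik; apply: xget_unique => // k' /coord_ratio_uniq; apply. Qed.

Lemma induced_coefP r i : coord_linked r i -> coord_ratio r i (induced_coef r i).
Proof. by move=> [k rik]; apply: xgetI rik. Qed.

Lemma mem_induced_blockset r i :
  (i \in induced_blockset r) <-> coord_nz i /\ coord_linked r i.
Proof. by rewrite inE; split => /asboolP. Qed.

Lemma coord_ratio_refl i : coord_ratio i i 1.
Proof. by split; [exact: K1 | move=> x _; rewrite mul1r]. Qed.

Lemma coord_linked_sym i j : coord_linked i j -> coord_linked j i.
Proof.
move=> [k [Kk xk]]; exists k^-1; split; first exact: KV.
by move=> x Xx; rewrite xk // mulKr // K_unit.
Qed.

Lemma coord_linked_trans i j l :
  coord_linked i j -> coord_linked j l -> coord_linked i l.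
Proof.
move=> [k [Kk xk]] [k' [Kk' xk']]; exists (k * k').
by split; [exact: KM | move=> x Xx; rewrite xk // xk' // mulrA].
Qed.

Lemma induced_blockset_self r : coord_nz r -> r \in induced_blockset r.
Proof.
by move=> nzr; apply/mem_induced_blockset; split => //; exists 1; exact: coord_ratio_refl.
Qed.

Lemma induced_block_eq r r' i : i \in induced_blockset r ->
  i \in induced_blockset r' -> induced_block r = induced_block r'.
Proof.
move=> /mem_induced_blockset[_ ri] /mem_induced_blockset[_ r'i].
have r_r' : coord_linked r r' by apply: coord_linked_trans ri (coord_linked_sym r'i).
have r'_r := coord_linked_sym r_r'.
have eq_blockset : induced_blockset r = induced_blockset r'.
  apply/setP => j; apply/idP/idP => /mem_induced_blockset[nzj lj];
    apply/mem_induced_blockset; split => //.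
    exact: coord_linked_trans r'_r lj.
  exact: coord_linked_trans r_r' lj.
have [k [Kk xk]] := r_r'.
have coef_r j : j \in induced_blockset r -> induced_coef r j = k * induced_coef r' j.
  move=> /mem_induced_blockset[nzj /(coord_linked_trans r'_r)/induced_coefP[Kc xc]].
  apply: induced_coefE => //; split; first exact: KM.
  by move=> x Xx; rewrite xk // xc // mulrA.
rewrite /induced_block -eq_blockset; congr pair.
have Uk := K_unit Kk.
apply/seteqP; split => eta [g Kg eta_g].
  by exists (g * k); [exact: KM | move=> j jB; rewrite eta_g // coef_r // mulrA].
exists (g * k^-1); first by apply: KM => //; exact: KV.
by move=> j jB; rewrite eta_g // coef_r // !mulrA mulrVK.
Qed.

Lemma induced_blocks_partition : is_partial_K_partition K induced_blocks.
Proof.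
split.
  move=> _ [r nzr ->]; split; first by apply/set0Pn; exists r; exact: induced_blockset_self.
  exists (induced_coef r); split => // i /mem_induced_blockset[_ /induced_coefP].
  by case.
move=> _ _ [r _ ->] [r' _ ->] neq i ir; apply/negP => ir'.
by apply: neq; exact: induced_block_eq ir ir'.
Qed.

Definition induced_partition : dowlingK :=
  exist _ induced_blocks induced_blocks_partition.

Lemma sub_induced_space : X `<=` dowling_space induced_partition.
Proof.
move=> x Xx; split => [i i_out|_ [r nzr ->] eta eta_r i j ib jb /=].
  apply: contrapT => /eqP xi_nz; have nzi : coord_nz i by exists x.
  by have := i_out _ (ex_intro2 _ _ i nzi erefl); rewrite induced_blockset_self.
apply/(dclass_mul_eq _ _ eta_r ib jb).
have [_ xi] := induced_coefP (proj2 (proj1 (mem_induced_blockset r i) ib)).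
have [_ xj] := induced_coefP (proj2 (proj1 (mem_induced_blockset r j) jb)).
by rewrite -xi // -xj.
Qed.

Lemma induced_space_ratio i j k : coord_ratio i j k ->
  forall v, dowling_space induced_partition v -> v i 0 = k * v j 0.
Proof.
move=> [Kk xk] v [v_out v_blocks].
have Uk := K_unit Kk.
have [nzj|zj] := pselect (coord_nz j); last first.
  have v0 l : ~ coord_nz l -> v l 0 = 0.
    by move=> zl; apply: v_out => _ [r _ ->]; apply/negP => /mem_induced_blockset[].
  have zi : ~ coord_nz i.
    move=> [x Xx xi_nz]; apply: zj; exists x => //; apply: contra xi_nz => /eqP xj0.
    by rewrite xk // xj0 mulr0.
  by rewrite !v0 // mulr0.
have ratio_ji : coord_ratio j i k^-1.
  by split; [exact: KV | move=> x Xx; rewrite xk // mulKr].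
have nzi : coord_nz i.
  case: nzj => x Xx xj_nz; exists x => //; apply: contra xj_nz.
  by rewrite (proj2 ratio_ji) // => /eqP ->; rewrite mulr0.
have ib : i \in induced_blockset j by apply/mem_induced_blockset; split; last exists k^-1.
have := v_blocks _ (ex_intro2 _ _ j nzj erefl) _ (dclass_refl _ _) i j ib
  (induced_blockset_self nzj).
rewrite (induced_coefE nzi ratio_ji) (induced_coefE nzj (coord_ratio_refl j)).
by rewrite mul1r => <-; rewrite mulVKr.
Qed.

End InducedPartition.

Lemma dowling_le_block (p p' : dowlingK) b b' i :
  dowling_le p p' -> sval p b -> sval p' b' -> i \in b.1 -> i \in b'.1 ->
  {subset b.1 <= b'.1} /\ b'.2 `<=` b.2.
Proof.
move=> le_pp' pb pb' ib ib'; have [S [Sp [cover refine]]] := le_pp' _ pb'.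
have [c Sc ic] := (cover i).1 ib'.
have eq_cb : c = b := dowling_block_uniq (Sp _ Sc) pb ic ib.
by rewrite -eq_cb; split => [j jc|]; [apply/cover; exists c | exact: refine].
Qed.

Lemma dowling_space_antitone (p p' : dowlingK) :
  dowling_le p p' -> dowling_space p' `<=` dowling_space p.
Proof.
move=> le_pp' v [v_out v_blocks]; split.
  move=> i i_out; apply: v_out => b' pb'; apply/negP => ib'.
  have [S [Sp [cover _]]] := le_pp' _ pb'.
  have [c Sc ic] := (cover i).1 ib'.
  by have := i_out _ (Sp _ Sc); rewrite ic.
move=> b pb eta eta_b i j ib jb.
have [xb Kxb b_xb] := dowling_block_class pb.
rewrite b_xb in eta_b.
have [[b' pb' ib']|i_out] := pselect (exists2 b', sval p' b' & i \in b'.1).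
  have [sub_bb' refine] := dowling_le_block le_pp' pb pb' ib ib'.
  have [x' _ b'_x'] := dowling_block_class pb'.
  have x'_b' : b'.2 x' by rewrite b'_x'; exact: dclass_refl.
  have := refine _ x'_b'; rewrite b_xb => x'_b.
  have := v_blocks _ pb' _ x'_b' i j ib' (sub_bb' _ jb).
  by move/(dclass_mul_eq _ _ x'_b ib jb)/(dclass_mul_eq _ _ eta_b ib jb).
have v_out_b c : c \in b.1 -> v c 0 = 0.
  move=> cb; apply: v_out => b' pb'; apply/negP => cb'; apply: i_out; exists b' => //.
  by have [sub_bb' _] := dowling_le_block le_pp' pb pb' cb cb'; exact: sub_bb'.
by rewrite !v_out_b // !mulr0.
Qed.

Lemma dowling_space_support (p : dowlingK) b v i j :
  dowling_space p v -> sval p b -> i \in b.1 -> j \in b.1 ->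
  v j 0 != 0 -> v i 0 != 0.
Proof.
move=> [_ v_blocks] pb ib jb; apply: contraNneq => vi0.
have [xb Kxb b_xb] := dowling_block_class pb.
have xb_b : b.2 xb by rewrite b_xb; exact: dclass_refl.
have Uxj := K_unit (Kxb _ jb).
have := v_blocks _ pb _ xb_b j i jb ib; rewrite vi0 mulr0.
by move/(congr1 (fun y => (xb j)^-1 * y)); rewrite mulKr // mulr0 => ->.
Qed.

Definition block_vector (B : {set 'I_n}) (xi : 'I_n -> quat R) : qvec :=
  \col_m (if m \in B then (xi m)^-1 else 0).

Lemma block_vector_nz (B : {set 'I_n}) (xi : 'I_n -> quat R) m :
  (forall i, i \in B -> K (xi i)) -> (block_vector B xi m 0 != 0) = (m \in B).
Proof.
move=> Kxi; rewrite mxE; case: ifP => mB; last by rewrite eqxx.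
by rewrite invr_eq0 (subgroup_neq0 K_group (Kxi _ mB)).
Qed.

Lemma block_vector_in_space (p : dowlingK) b xi : sval p b ->
  (forall i, i \in b.1 -> K (xi i)) -> b.2 = dclass K b.1 xi ->
  dowling_space p (block_vector b.1 xi).
Proof.
move=> pb Kxi b_xi; split => [i /(_ _ pb) /negPf ib|c pc eta eta_c i j ic jc].
  by rewrite mxE ib.
have [eq_cb|neq_cb] := pselect (c = b); last first.
  have [_ /(_ _ _ pc pb neq_cb) disj] := svalP p.
  by rewrite !mxE (negPf (disj i ic)) (negPf (disj j jc)) !mulr0.
rewrite eq_cb b_xi in eta_c ic jc *; apply/(dclass_mul_eq _ _ eta_c ic jc).
by rewrite !mxE ic jc !mulrV ?(K_unit (Kxi _ _)).
Qed.

Lemma dowling_le_of_space (p p' : dowlingK) :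
  dowling_space p' `<=` dowling_space p -> dowling_le p p'.
Proof.
move=> sub_space b' pb'; have [x' Kx' b'_x'] := dowling_block_class pb'.
set w := block_vector b'.1 x'.
have w_p := sub_space _ (block_vector_in_space pb' Kx' b'_x').
have closed_b' b j i : sval p b -> i \in b.1 -> j \in b.1 -> j \in b'.1 -> i \in b'.1.
  move=> pb ib jb; rewrite -!(block_vector_nz _ Kx').
  exact: dowling_space_support w_p pb ib jb.
exists [set b | sval p b /\ exists2 j, j \in b.1 & j \in b'.1].
split; first by move=> b [].
split => [i|b [pb [j jb jb']] x'' x''_b'].
  split => [ib'|[b [pb [j jb jb']] ib]]; last exact: closed_b' pb ib jb jb'.
  have [[b pb ib]|i_out] := pselect (exists2 b, sval p b & i \in b.1).
    by exists b => //; split => //; exists i.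
  have wi0 : w i 0 = 0.
    by apply: (proj1 w_p) => b pb; apply/negP => ib; apply: i_out; exists b.
  by move: ib'; rewrite -(block_vector_nz _ Kx') -/w wi0 eqxx.
have [xb Kxb b_xb] := dowling_block_class pb.
have xb_b : b.2 xb by rewrite b_xb; exact: dclass_refl.
rewrite b'_x' in x''_b'; case: x''_b' => g Kg x''_g.
have ratio i : i \in b.1 -> xb i * (x' i)^-1 = xb j * (x' j)^-1.
  move=> ib; have ib' := closed_b' _ _ _ pb ib jb jb'.
  by have := (proj2 w_p) _ pb _ xb_b i j ib jb; rewrite !mxE ib' jb'.
rewrite b_xb; exists (g * (xb j * (x' j)^-1)^-1).
  apply: (KM Kg); apply: KV.
  by apply: (KM (Kxb _ jb)); apply: KV; apply: Kx'.
move=> i ib; have ib' := closed_b' _ _ _ pb ib jb jb'.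
have Uxi := K_unit (Kx' _ ib').
have Uxbi := K_unit (Kxb _ ib).
by rewrite -(ratio _ ib) x''_g // invrM ?unitrV // invrK -!mulrA mulVr ?mulr1.
Qed.

Lemma dowling_space_le (p p' : dowlingK) :
  dowling_space p' `<=` dowling_space p <-> dowling_le p p'.
Proof. by split; [exact: dowling_le_of_space | exact: dowling_space_antitone]. Qed.

Lemma dowling_le_sub (p p' : dowlingK) :
  dowling_le p p' -> dowling_le p' p -> sval p' `<=` sval p.
Proof.
move=> le_pp' le_p'p b' pb'; have [/(_ _ pb') [/set0Pn[i ib'] _] _] := svalP p'.
have [S [Sp [cover _]]] := le_pp' _ pb'; have [b Sb ib] := (cover i).1 ib'.
have pb := Sp _ Sb.
have [sub_bb' sup_bb'] := dowling_le_block le_pp' pb pb' ib ib'.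
have [sub_b'b sup_b'b] := dowling_le_block le_p'p pb' pb ib' ib.
suff -> : b' = b by [].
move: b' b {S Sp Sb cover pb pb' ib ib'} sub_bb' sup_bb' sub_b'b sup_b'b.
move=> [B' C'] [B C] /= sub_BB' sub_C'C sub_B'B sub_CC'; congr pair.
  by apply/setP => j; apply/idP/idP => [/sub_B'B|/sub_BB'].
by apply/seteqP; split.
Qed.

Lemma dowling_le_anti (p p' : dowlingK) :
  dowling_le p p' -> dowling_le p' p -> p = p'.
Proof.
move=> le_pp' le_p'p; case: p p' le_pp' le_p'p => [p p_part] [p' p'_part] le_pp' le_p'p.
apply: eq_exist; apply/seteqP; split.
  exact: (dowling_le_sub le_p'p le_pp').
exact: (dowling_le_sub le_pp' le_p'p).
Qed.

Lemma dowling_space_inj : injective (dowling_space : dowlingK -> set qvec).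
Proof.
move=> p p' eq_space.
by apply: dowling_le_anti; apply/dowling_space_le; rewrite eq_space.
Qed.

Definition monomial (g : qmx) :=
  forall i, exists j k, K k /\ forall v : qvec, (g *m v) i 0 = k * v j 0.

Definition monomial_units : set qmx :=
  [set g | monomial g /\ exists2 g', monomial g' & g * g' = 1 /\ g' * g = 1].

Lemma monomial1 : monomial 1.
Proof.
move=> i; exists i, 1; split; first exact: K1.
by move=> v; rewrite mul1mx mul1r.
Qed.

Lemma monomialM g g' : monomial g -> monomial g' -> monomial (g * g').
Proof.
move=> mg mg' i; have [j [k [Kk gk]]] := mg i; have [l [k' [Kk' g'k']]] := mg' j.
exists l, (k * k'); split; first exact: KM.
by move=> v; rewrite -mulmxE -mulmxA gk g'k' mulrA.
Qed.

Lemma monomial_diag (d : 'rV[quat R]_n) : (forall i, K (d 0 i)) -> monomial (diag_mx d).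
Proof. by move=> Kd i; exists i, (d 0 i); split => // v; rewrite mul_diag_mx mxE. Qed.

Lemma monomial_perm (s : 'S_n) : monomial (perm_mx s).
Proof.
move=> i; exists (s i), 1; split; first exact: K1.
by move=> v; rewrite -row_permE mxE mul1r.
Qed.

Lemma monomial_units_subgroup : is_subgroup monomial_units.
Proof.
split; first by split; [exact: monomial1 | exists 1; [exact: monomial1 | rewrite mulr1]].
split => [x y [mx [x' mx' [xx' x'x]]] [my [y' my' [yy' y'y]]]|x [mx [x' mx' [xx' x'x]]]].
  split; first exact: monomialM.
  exists (y' * x'); first exact: monomialM.
  by rewrite mulrA -(mulrA x) yy' mulr1 xx' mulrA -(mulrA y') x'x mulr1.
by exists x' => //; split => //; exists x.
Qed.

Lemma G_n_monomial (H : set (quat R)) : G_n K H `<=` monomial.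
Proof.
suff G_units : G_n K H `<=` monomial_units by move=> g /G_units [].
move=> g; apply; first exact: monomial_units_subgroup.
move=> x [[d [-> [Kd _]]]|[s ->]].
  split; first exact: monomial_diag.
  exists (diag_mx (\row_i (d 0 i)^-1)).
    by apply: monomial_diag => i; rewrite mxE; apply: KV.
  rewrite -[1]diag_const_mx -!mulmxE !mulmx_diag.
  split; congr diag_mx; apply/rowP => i.
    by rewrite !mxE mulrV // K_unit.
  by rewrite !mxE mulVr // K_unit.
split; first exact: monomial_perm.
exists (perm_mx s^-1); first exact: monomial_perm.
by rewrite -!mulmxE -!perm_mxM mulgV mulVg perm_mx1.
Qed.

Lemma fixspace_induced (H : set (quat R)) g (X : set qvec) :
  G_n K H g -> X `<=` fixspace g ->
  dowling_space (induced_partition X) `<=` fixspace g.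
Proof.
move=> /G_n_monomial mg X_fix v v_space; apply/fixspaceP => i.
have [j [k [Kk gk]]] := mg i; rewrite gk; apply/esym.
apply: (induced_space_ratio _ v_space); split => // x Xx.
by have /fixspaceP/(_ i) := X_fix _ Xx; rewrite gk => ->.
Qed.

Section Reflections.
Variables (H : set (quat R)) (h : quat R).
Hypotheses (H_group : is_subgroup H) (HK : H `<=` K).
Hypotheses (Hh : H h) (h_neq1 : h != 1) (h_torsion : exists2 m, (0 < m)%N & h ^+ m = 1).
Local Notation G := (G_n K H).

Lemma diag_in_A_n (f : nat -> quat R) : (forall m, K (f m)) ->
  H (\prod_(0 <= m < n) f m) -> A_n K H (diag_mx (\row_(m < n) f m)).
Proof.
move=> Kf Hf; exists (\row_(m < n) f m); split => //; split => [i|].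
  by rewrite mxE; apply: Kf.
by rewrite big_mkord in Hf; under eq_bigr do rewrite mxE.
Qed.

(* Diagonals are written as functions of the index in nat, so that the
   product condition of A_n is computed by big_nat_only1 and big_nat_pair. *)
Definition diag_refl (i : 'I_n) : qmx :=
  diag_mx (\row_(m < n) if m == i :> nat then h else 1).

Definition transp_refl (i j : 'I_n) (a : quat R) : qmx :=
  perm_mx (tperm i j) *m
  diag_mx (\row_(m < n) if m == i :> nat then a^-1 else if m == j :> nat then a else 1).

Lemma diag_reflE i (v : qvec) m :
  (diag_refl i *m v) m 0 = if m == i then h * v i 0 else v m 0.
Proof. by rewrite mul_diag_mx !mxE val_eqE; case: eqP => [->|]; rewrite ?mul1r. Qed.

Lemma transp_reflE i j a (v : qvec) m : i != j ->
  (transp_refl i j a *m v) m 0 =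
    if m == i then a * v j 0 else if m == j then a^-1 * v i 0 else v m 0.
Proof.
move=> ij; rewrite -mulmxA -row_permE mul_diag_mx !mxE !val_eqE.
case: (eqVneq m i) => [->|mi]; first by rewrite tpermL eq_sym (negPf ij) eqxx.
case: (eqVneq m j) => [->|mj]; first by rewrite tpermR eqxx.
have -> : tperm i j m = m by apply: tpermD; rewrite eq_sym.
by rewrite (negPf mi) (negPf mj) mul1r.
Qed.

Lemma diag_refl_G i : G (diag_refl i).
Proof.
apply: gen_group_sub; left.
apply: (diag_in_A_n (f := fun m : nat => if m == i then h else 1)) => [m|].
  by case: ifP => _; [exact: HK | exact: K1].
by rewrite (big_nat_only1 _ (ltn_ord i)) /= ?eqxx // => m _ /negPf ->.
Qed.

Lemma transp_refl_G i j a : K a -> i != j -> G (transp_refl i j a).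
Proof.
move=> Ka ij; rewrite /transp_refl mulmxE; apply: gen_groupM.
  by apply: gen_group_sub; right; exists (tperm i j).
have Ua := K_unit Ka.
apply: gen_group_sub; left.
apply: (diag_in_A_n (f := fun m : nat =>
  if m == i then a^-1 else if m == j then a else 1)) => [m|].
  case: ifP => _; first exact: KV.
  by case: ifP => _ //; exact: K1.
have one_out (m : nat) : m != i -> m != j ->
  (if m == i then a^-1 else if m == j then a else 1) = 1.
  by move=> /negPf -> /negPf ->.
have ji : (j == i :> nat) = false by apply/negbTE; rewrite eq_sym.
case: (ltngtP i j) => [lt_ij|lt_ji|eq_ij]; last by rewrite (val_inj eq_ij) eqxx in ij.
  rewrite (big_nat_pair _ lt_ij (ltn_ord j) one_out) /= eqxx ji eqxx mulVr //.
  exact: (subgroup1 H_group).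
rewrite (big_nat_pair _ lt_ji (ltn_ord i)) => [|m mj mi]; last exact: one_out.
by rewrite /= eqxx ji eqxx mulrV //; exact: (subgroup1 H_group).
Qed.

Lemma diag_reflX i k :
  diag_refl i ^+ k = diag_mx (\row_(m < n) if m == i :> nat then h ^+ k else 1).
Proof.
elim: k => [|k IHk].
  by rewrite expr0 -[1]diag_const_mx; congr diag_mx; apply/rowP => m; rewrite !mxE; case: ifP.
rewrite exprS IHk -mulmxE mulmx_diag; congr diag_mx; apply/rowP => m.
by rewrite !mxE; case: ifP; rewrite ?exprS ?mul1r.
Qed.

Lemma diag_refl_reflection i : is_reflection G (diag_refl i).
Proof.
split; first exact: diag_refl_G.
split.
  have [m m_gt0 hm] := h_torsion; exists m; split => //.
  apply/esym; rewrite diag_reflX -[1]diag_const_mx; congr diag_mx; apply/rowP => k.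
  by rewrite !mxE hm; case: ifP.
have U1h : 1 - h \is a GRing.unit by apply: quat_unitf; rewrite subr_eq0 eq_sym.
apply: (rank_one_col (u := delta_mx i 0) (f := fun v => (1 - h) * v i 0)).
- by apply/eqP => /matrixP/(_ i 0); rewrite !mxE !eqxx => /eqP; rewrite oner_eq0.
- move=> v; apply/matrixP => m k; rewrite (ord1 k) mulmx1B diag_reflE !mxE.
  by case: (eqVneq m i) => [->|]; rewrite ?mul1r ?mul0r ?mulrBl ?mul1r ?subrr.
move=> l; exists (\col_m (if m == i then (1 - h)^-1 * l else 0)).
by rewrite /= mxE eqxx mulrA mulrV ?mul1r.
Qed.

Lemma transp_refl_reflection i j a : K a -> i != j -> is_reflection G (transp_refl i j a).
Proof.
move=> Ka ij; have Ua := K_unit Ka.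
have ji : (j == i) = false by apply/negbTE; rewrite eq_sym.
split; first exact: transp_refl_G.
split.
  exists 2%N; split => //; apply: matrix_eq_mulmx => v.
  rewrite expr2 -mulmxE -mulmxA mul1mx; apply/matrixP => m k; rewrite (ord1 k).
  rewrite !transp_reflE //; case: (eqVneq m i) => [->|mi]; first by rewrite ji eqxx mulVKr.
  by case: (eqVneq m j) => [->|mj]; rewrite ?eqxx ?mulKr.
pose u : qvec := \col_m (if m == i then 1 else if m == j then - a^-1 else 0).
apply: (rank_one_col (u := u) (f := fun v => v i 0 - a * v j 0)).
- by apply/eqP => /matrixP/(_ i 0); rewrite !mxE eqxx => /eqP; rewrite oner_eq0.
- move=> v; apply/matrixP => m k; rewrite (ord1 k) mulmx1B transp_reflE // !mxE.
  case: (eqVneq m i) => [->|mi]; first by rewrite mul1r.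
  case: (eqVneq m j) => [->|mj]; last by rewrite subrr mul0r.
  by rewrite mulNr mulrBr mulKr // opprB.
move=> l; exists (\col_m (if m == i then l else 0)).
by rewrite /= !mxE eqxx ji mulr0 subr0.
Qed.

Lemma dowling_space_cut (p : dowlingK) v :
  (forall r, is_reflection G r -> dowling_space p `<=` fixspace r -> fixspace r v) ->
  dowling_space p v.
Proof.
move=> v_fix; split => [i i_out|b pb eta eta_b i j ib jb].
  have /fixspaceP/(_ i) : fixspace (diag_refl i) v.
    apply: v_fix; first exact: diag_refl_reflection.
    move=> w [w_out _]; apply/fixspaceP => m; rewrite diag_reflE.
    by case: eqP => [->|_] //; rewrite w_out // mulr0.
  rewrite diag_reflE eqxx => hv.
  have Uh1 : h - 1 \is a GRing.unit by apply: quat_unitf; rewrite subr_eq0.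
  by apply: (mulrI Uh1); rewrite mulr0 mulrBl hv mul1r subrr.
have [-> //|ij] := eqVneq i j.
have [xb Kxb b_xb] := dowling_block_class pb.
have Keta : forall m, m \in b.1 -> K (eta m).
  by apply: (dclass_in Kxb); rewrite -b_xb.
have [Ki Kj] := (Keta _ ib, Keta _ jb).
have Ka : K ((eta i)^-1 * eta j) by apply: KM => //; apply: KV.
have /fixspaceP/(_ i) : fixspace (transp_refl i j ((eta i)^-1 * eta j)) v.
  apply: v_fix; first exact: transp_refl_reflection.
  move=> w [_ w_blocks]; have w_ij := w_blocks _ pb _ eta_b i j ib jb.
  apply/fixspaceP => m; rewrite transp_reflE //.
  case: (eqVneq m i) => [->|_]; first by rewrite -mulrA -w_ij mulKr // K_unit.
  case: (eqVneq m j) => [->|_] //.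
  by rewrite invrM ?unitrV ?K_unit // invrK -mulrA w_ij mulKr // K_unit.
rewrite transp_reflE // eqxx => <-.
by rewrite !mulrA mulrV ?mul1r // K_unit.
Qed.

Lemma pstab_dowling_space_le (p p' : dowlingK) :
  pstab G (dowling_space p) `<=` pstab G (dowling_space p') <-> dowling_le p p'.
Proof.
split => [sub_pstab|/dowling_space_le sub_space]; last first.
  by move=> r [Gr r_fix]; split => // x /sub_space /r_fix.
apply/dowling_space_le => v v_p'; apply: dowling_space_cut => r r_refl p_fix.
by have [_] := sub_pstab r (conj (proj1 r_refl) p_fix); apply.
Qed.

Lemma pstab_induced (X : set qvec) :
  pstab G X = pstab G (dowling_space (induced_partition X)).
Proof.
apply/seteqP; split => r [Gr r_fix]; split => // x.
  exact: (fixspace_induced Gr r_fix).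
by move=> Xx; apply: r_fix; exact: sub_induced_space.
Qed.

Lemma dowling_space_flat (p : dowlingK) : is_flat G (dowling_space p).
Proof.
exists [set Y | arrangement G Y /\ dowling_space p `<=` Y]; first by move=> Y [].
apply/seteqP; split => [v v_p Y [_ sub_Y]|v v_Y]; first exact: sub_Y.
apply: dowling_space_cut => r r_refl p_fix.
by apply: v_Y; split => //; exists r.
Qed.

Lemma flat_induced (X : set qvec) :
  is_flat G X -> X = dowling_space (induced_partition X).
Proof.
move=> [S S_refl ->]; apply/seteqP; split; first exact: sub_induced_space.
move=> v v_space Y SY; have [r [Gr _] eq_Y] := S_refl _ SY.
rewrite eq_Y; apply: (fixspace_induced Gr _ v_space) => x /(_ _ SY).
by rewrite eq_Y.
Qed.

Lemma parabolic_dowling_iso : order_iso (@parabolic_le R n G) (@dowling_le R n K).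
Proof.
pose g (p : dowlingK) : parabolic G :=
  exist _ (pstab G (dowling_space p)) (ex_intro _ _ erefl).
apply: (@order_iso_of_embedding _ _ _ _ g)
  => [p p' /(congr1 sval) /= eq_g|[P [X eq_P]]|p p'].
- by apply: dowling_le_anti; apply/pstab_dowling_space_le; rewrite eq_g.
- by exists (induced_partition X); apply: eq_exist; rewrite eq_P -pstab_induced.
- exact: pstab_dowling_space_le.
Qed.

Lemma flat_dowling_iso : order_iso (@flat_le R n G) (@dowling_le R n K).
Proof.
pose g (p : dowlingK) : flat G := exist _ (dowling_space p) (dowling_space_flat p).
apply: (@order_iso_of_embedding _ _ _ _ g) => [p p' /(congr1 sval)|[X X_flat]|p p'].
- exact: dowling_space_inj.
- by exists (induced_partition X); apply: eq_exist; rewrite -flat_induced.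
- exact: dowling_space_le.
Qed.

End Reflections.
End DowlingSpace.

Theorem corollary4p6 (R : realType) (K H : set (quat R)) (n : nat) :
  finite_set K -> is_subgroup K ->
  finite_set H -> normal_subgroup H K ->
  commutator_subgroup K `<=` H ->
  H <> [set 1] ->
  (3 <= n)%N ->
  order_iso (@parabolic_le R n (G_n K H)) (@dowling_le R n K) /\
  order_iso (@flat_le R n (G_n K H)) (@dowling_le R n K).
Proof.
move=> _ K_group H_fin [H_group [HK _]] _ /(subgroup_nontrivial H_group)[h Hh h_neq1] _.
have h_torsion := subgroup_torsion H_group H_fin Hh.
split; first exact: (parabolic_dowling_iso n K_group H_group HK Hh h_neq1 h_torsion).
exact: (flat_dowling_iso n K_group H_group HK Hh h_neq1 h_torsion).
Qed.
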